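(* Let $g(x)=\dfrac{1}{1-\cos(x)}$ for $x\in(0,2\pi)$. Then $g$ is completely monotonic on $(0,\pi]$ and absolutely monotonic on $[\pi,2\pi)$.
   Context: A function $f:I\to\mathbb{R}$ on an interval $I\subset\mathbb{R}$ is completely monotonic if it has derivatives of all orders and $(-1)^n f^{(n)}(x)\ge 0$ for all $n=0,1,2,\dots$ and $x\in I$; it is absolutely monotonic if it has derivatives of all orders and $f^{(n)}(x)\ge 0$ for all $n=0,1,2,\dots$ and $x\in I$. *)

From Stdlib Require Import Reals.
From Coquelicot Require Import Coquelicot.
Open Scope R_scope.

(* g(x) = 1/(1 - cos x); only its values on (0, 2*PI) matter. *)
Definition g (x : R) : R := / (1 - cos x).

Definition smooth_on (f : R -> R) (D : R -> Prop) : Prop :=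
  forall (n : nat) (x : R), D x -> ex_derive (Derive_n f n) x.

Definition completely_monotonic_on (f : R -> R) (I : R -> Prop) : Prop :=
  smooth_on f I /\
  forall (n : nat) (x : R), I x -> 0 <= (-1) ^ n * Derive_n f n x.

Definition absolutely_monotonic_on (f : R -> R) (I : R -> Prop) : Prop :=
  smooth_on f I /\
  forall (n : nat) (x : R), I x -> 0 <= Derive_n f n x.

(* With c(x) = cot(x/2) we have g = (1 + c^2)/2 and c' = -(1 + c^2)/2, so by
   induction g^(n)(x) = (-1/2)^n P_n(c(x)), where P_0 = (1 + u^2)/2 and
   P_(n+1) = (1 + u^2) P_n'.  Each P_n has nonnegative coefficients and the
   parity of n.  On (0, PI] we have c >= 0, hence (-1)^n g^(n) >= 0; on
   [PI, 2 PI) we have c <= 0, and parity gives g^(n) = (1/2)^n P_n(-c) >= 0. *)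

From Stdlib Require Import Reals Lra.
From Coquelicot Require Import Coquelicot.
Open Scope R_scope.

(* Polynomial functions with nonnegative coefficients, described by their
   closure properties rather than by coefficient lists. *)
Inductive nonneg_poly : (R -> R) -> Prop :=
| nonneg_poly_const c : 0 <= c -> nonneg_poly (fun _ => c)
| nonneg_poly_plus f h : nonneg_poly f -> nonneg_poly h -> nonneg_poly (fun u => f u + h u)
| nonneg_poly_mulX f : nonneg_poly f -> nonneg_poly (fun u => u * f u)
| nonneg_poly_ext f h : nonneg_poly f -> (forall u, f u = h u) -> nonneg_poly h.

Lemma nonneg_poly_ge0 f : nonneg_poly f -> forall u, 0 <= u -> 0 <= f u.
Proof.
  induction 1 as [c Hc | f h _ IHf _ IHh | f _ IHf | f h _ IHf Efh]; intros u Hu.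
  - exact Hc.
  - specialize (IHf u Hu); specialize (IHh u Hu); lra.
  - specialize (IHf u Hu); nra.
  - rewrite <- Efh; auto.
Qed.

Lemma nonneg_poly_derive f :
  nonneg_poly f -> exists f', nonneg_poly f' /\ forall u, is_derive f u (f' u).
Proof.
  induction 1 as [c Hc | f h _ [f' [Nf' Df']] _ [h' [Nh' Dh']]
                  | f Nf [f' [Nf' Df']] | f h _ [f' [Nf' Df']] Efh].
  - exists (fun _ => 0); split.
    + apply nonneg_poly_const; lra.
    + intros u; apply (is_derive_const c).
  - exists (fun u => f' u + h' u); split.
    + now apply nonneg_poly_plus.
    + intros u; apply (is_derive_plus f h); auto.
  - exists (fun u => f u + u * f' u); split.
    + apply nonneg_poly_plus; auto. now apply nonneg_poly_mulX.
    + intros u.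
      assert (Hmul := is_derive_mult (fun u => u) f u 1 (f' u)
                        (is_derive_id u) (Df' u) Rmult_comm).
      replace (f u + u * f' u) with (plus (mult 1 (f u)) (mult u (f' u)))
        by (unfold plus, mult; simpl; ring).
      exact Hmul.
  - exists f'; split; auto.
    intros u; eapply is_derive_ext; [exact Efh | auto].
Qed.

Lemma nonneg_poly_mul_1_plus_sq f : nonneg_poly f -> nonneg_poly (fun u => (1 + u ^ 2) * f u).
Proof.
  intros Nf. apply nonneg_poly_ext with (fun u => f u + u * (u * f u)).
  - apply nonneg_poly_plus; auto. do 2 apply nonneg_poly_mulX; auto.
  - intros u; simpl; ring.
Qed.

Lemma is_derive_parity (f f' : R -> R) s :
  (forall u, is_derive f u (f' u)) -> (forall u, f (- u) = s * f u) ->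
  forall u, f' (- u) = - s * f' u.
Proof.
  intros Df Pf u.
  assert (Dreflect : is_derive (fun v => f (- v)) u (- f' (- u))).
  { replace (- f' (- u)) with (scal (opp 1) (f' (- u)))
      by (unfold scal, opp; simpl; unfold mult; simpl; ring).
    apply (is_derive_comp f (fun v => - v)); [apply Df |].
    exact (is_derive_opp (fun v => v) u 1 (is_derive_id u)). }
  assert (Dscaled : is_derive (fun v => s * f v) u (s * f' u)).
  { apply (is_derive_scal f u s), Df. }
  apply (is_derive_ext _ _ _ _ Pf) in Dreflect.
  assert (Eslopes : - f' (- u) = s * f' u).
  { rewrite <- (is_derive_unique _ _ _ Dreflect). apply is_derive_unique, Dscaled. }
  lra.
Qed.

Lemma eq_locally_in_interval a b x (f h : R -> R) :
  a < x < b -> (forall t, a < t < b -> f t = h t) -> locally x (fun t => f t = h t).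
Proof.
  intros Hx Efh.
  assert (Hopen : open (fun t : R => a < t /\ t < b))
    by (apply open_and; [apply open_gt | apply open_lt]).
  eapply filter_imp; [| exact (Hopen x Hx)]. intros t Ht; apply Efh; exact Ht.
Qed.

Definition cot_half x := cos (x / 2) / sin (x / 2).

Lemma sin_half_pos x : 0 < x < 2 * PI -> 0 < sin (x / 2).
Proof. intros Hx; apply sin_gt_0; lra. Qed.

Lemma is_derive_cot_half x :
  0 < x < 2 * PI -> is_derive cot_half x (- (1 + cot_half x ^ 2) / 2).
Proof.
  intros Hx. assert (Hsin := sin_half_pos x Hx). assert (Hpyth := sin2_cos2 (x / 2)).
  unfold cot_half. auto_derive; change (x * / 2) with (x / 2).
  - lra.
  - field_simplify; [reflexivity | lra | lra].
Qed.

Lemma g_cot_half x : 0 < x < 2 * PI -> g x = (1 + cot_half x ^ 2) / 2.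
Proof.
  intros Hx. assert (Hsin := sin_half_pos x Hx). assert (Hpyth := sin2_cos2 (x / 2)).
  unfold g, cot_half, Rsqr in *. replace x with (2 * (x / 2)) at 1 by field.
  rewrite cos_2a_sin. field_simplify; [| lra | nra].
  replace (sin (x / 2) ^ 2 + cos (x / 2) ^ 2) with 1 by (simpl; lra). reflexivity.
Qed.

Lemma is_derive_Derive_n_g n F F' :
  (forall u, is_derive F u (F' u)) ->
  (forall x, 0 < x < 2 * PI -> Derive_n g n x = (-1/2) ^ n * F (cot_half x)) ->
  forall x, 0 < x < 2 * PI ->
  is_derive (Derive_n g n) x ((-1/2) ^ S n * ((1 + cot_half x ^ 2) * F' (cot_half x))).
Proof.
  intros DF EF x Hx.
  apply is_derive_ext_loc with (fun t => (-1/2) ^ n * F (cot_half t)).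
  { apply (eq_locally_in_interval 0 (2 * PI)); auto. intros t Ht; symmetry; auto. }
  replace ((-1/2) ^ S n * ((1 + cot_half x ^ 2) * F' (cot_half x))) with
    ((-1/2) ^ n * scal (- (1 + cot_half x ^ 2) / 2) (F' (cot_half x)))
    by (unfold scal; simpl; unfold mult; simpl; field).
  apply (is_derive_scal (fun t => F (cot_half t))).
  apply (is_derive_comp F cot_half); [apply DF | now apply is_derive_cot_half].
Qed.

Lemma Derive_n_g_cot_half n : exists F,
  nonneg_poly F /\ (forall u, F (- u) = (-1) ^ n * F u) /\
  forall x, 0 < x < 2 * PI -> Derive_n g n x = (-1/2) ^ n * F (cot_half x).
Proof.
  induction n as [| n [F [NF [PF EF]]]].
  - exists (fun u => (1 + u ^ 2) * (1/2)). split; [| split].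
    + apply nonneg_poly_mul_1_plus_sq, nonneg_poly_const; lra.
    + intros u; simpl; ring.
    + intros x Hx; simpl. rewrite g_cot_half; auto. field.
  - destruct (nonneg_poly_derive F NF) as [F' [NF' DF]].
    exists (fun u => (1 + u ^ 2) * F' u). split; [| split].
    + now apply nonneg_poly_mul_1_plus_sq.
    + intros u. rewrite (is_derive_parity F F' _ DF PF u). simpl; ring.
    + intros x Hx. simpl Derive_n.
      now rewrite (is_derive_unique _ _ _ (is_derive_Derive_n_g n F F' DF EF x Hx)).
Qed.

Lemma smooth_on_g : smooth_on g (fun x => 0 < x < 2 * PI).
Proof.
  intros n x Hx. destruct (Derive_n_g_cot_half n) as [F [NF [_ EF]]].
  destruct (nonneg_poly_derive F NF) as [F' [_ DF]].
  eexists; exact (is_derive_Derive_n_g n F F' DF EF x Hx).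
Qed.

Lemma cot_half_ge0 x : 0 < x <= PI -> 0 <= cot_half x.
Proof.
  intros Hx. unfold cot_half.
  apply Rmult_le_pos; [apply cos_ge_0; lra |].
  left; apply Rinv_0_lt_compat, sin_half_pos; lra.
Qed.

Lemma cot_half_le0 x : PI <= x < 2 * PI -> cot_half x <= 0.
Proof.
  intros Hx. unfold cot_half, Rdiv.
  assert (cos (x / 2) <= 0) by (apply cos_le_0; lra).
  assert (0 < / sin (x / 2)) by (apply Rinv_0_lt_compat, sin_half_pos; lra).
  nra.
Qed.

Theorem theorem1 :
  smooth_on g (fun x => 0 < x < 2 * PI) /\
  completely_monotonic_on g (fun x => 0 < x <= PI) /\
  absolutely_monotonic_on g (fun x => PI <= x < 2 * PI).
Proof.
  assert (HPI := PI_RGT_0).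
  split; [exact smooth_on_g | split; split].
  - intros n x Hx. apply smooth_on_g; lra.
  - intros n x Hx. destruct (Derive_n_g_cot_half n) as [F [NF [_ EF]]].
    rewrite EF, <- Rmult_assoc, <- Rpow_mult_distr by lra.
    apply Rmult_le_pos; [apply pow_le; lra |].
    apply nonneg_poly_ge0, cot_half_ge0; auto.
  - intros n x Hx. apply smooth_on_g; lra.
  - intros n x Hx. destruct (Derive_n_g_cot_half n) as [F [NF [PF EF]]].
    rewrite EF by lra.
    replace ((-1/2) ^ n * F (cot_half x)) with ((1/2) ^ n * F (- cot_half x))
      by (rewrite PF, <- Rmult_assoc, <- Rpow_mult_distr; do 2 f_equal; lra).
    apply Rmult_le_pos; [apply pow_le; lra |].
    apply nonneg_poly_ge0; [exact NF |]. pose proof (cot_half_le0 x Hx); lra.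
Qed.
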